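(* Let $G$ be a graph on $d+2$ vertices with adjacency matrix $A_G$ having eigenvalues $\lambda_1\geq\lambda_2\geq\dots\geq\lambda_{d+2}$, and let $\overline{B_G}=\lambda_2 I - A_G$. If $w^T\overline{B_G}w\geq0$ for every $w\in\mathbf{1}^\perp$, then there exist a nonzero vector $w\in\mathbf{1}^\perp$ and a real number $\gamma$ with $\overline{B_G}w=\gamma\mathbf{1}$, and $\det(\overline{B_G})=0$.
   Context: Graphs are finite and simple; $\mathbf{1}$ is the all-ones vector and $\mathbf{1}^\perp$ its orthogonal complement. *)

From HB Require Import structures.
From mathcomp Require Import all_boot all_order all_algebra.
From mathcomp Require Import all_classical all_reals.
Set Implicit Arguments. Unset Strict Implicit. Unset Printing Implicit Defensive.
Import Order.TTheory GRing.Theory Num.Theory.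
Local Open Scope ring_scope.

Definition simple_graph (n : nat) (e : rel 'I_n) : Prop :=
  irreflexive e /\ symmetric e.

Definition adjmx (R : realType) (n : nat) (e : rel 'I_n) : 'M[R]_n :=
  \matrix_(i, j) (e i j)%:R.

Definition ones (R : realType) (n : nat) : 'cV[R]_n := const_mx 1.

Definition in_ones_perp (R : realType) (n : nat) (w : 'cV[R]_n) : Prop :=
  ((ones R n)^T *m w) 0 0 = 0.

Definition qform (R : realType) (n : nat) (B : 'M[R]_n) (w : 'cV[R]_n) : R :=
  (w^T *m B *m w) 0 0.

(* lam lists the eigenvalues of A with multiplicity in nonincreasing order:
   the characteristic polynomial factors as prod_i (X - lam i). *)
Definition sorted_eigenvalues (R : realType) (n : nat) (A : 'M[R]_n)
  (lam : 'I_n -> R) : Prop :=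
  (forall i j : 'I_n, (i <= j)%N -> lam j <= lam i) /\
  char_poly A = \prod_(i < n) ('X - (lam i)%:P).

From HB Require Import structures.
From mathcomp Require Import all_boot all_order all_algebra.
From mathcomp Require Import all_classical all_reals.
From mathcomp Require Import ring.
Set Implicit Arguments. Unset Strict Implicit. Unset Printing Implicit Defensive.
Import Order.TTheory GRing.Theory Num.Theory.
Local Open Scope ring_scope.

(* Let v be an eigenvector of the adjacency matrix A for lambda_2, so that
   v B = 0 and det B = 0.  As A is symmetric, A also has an eigenvector z for
   lambda_1 orthogonal to v, even when lambda_1 = lambda_2: deflating A along v
   yields a vector z with z A = lambda_1 z + c v, and symmetry forces c = 0
   once z is made orthogonal to v.  On the plane spanned by v and z the form of
   B is a v + b z |-> b^2 (lambda_2 - lambda_1) |z|^2 <= 0.  This plane meets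
   the hyperplane 1^perp in some w != 0, and nonnegativity of the form there
   forces w B = 0, so gamma = 0 works. *)

Lemma prod_XsubC_split (R : comNzRingType) n (f : 'I_n -> R) (i j : 'I_n) :
  i != j -> exists2 p : {poly R},
    \prod_k ('X - (f k)%:P) = ('X - (f i)%:P) * p & root p (f j).
Proof.
move=> ij; exists (\prod_(k | k != i) ('X - (f k)%:P)); first exact: bigD1.
by rewrite /root horner_prod (bigD1 j) 1?eq_sym //= hornerXsubC subrr mul0r.
Qed.

Lemma mul_row'1_mx (R : pzSemiRingType) m n (k : 'I_m) (M : 'M[R]_(m, n)) :
  row' k 1%:M *m M = row' k M.
Proof. exact: (esym (rowsubE (lift k) M)). Qed.

Lemma mulmx_col' (R : pzSemiRingType) m n p (k : 'I_n) (A : 'M[R]_(m, p))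
    (B : 'M_(p, n)) :
  A *m col' k B = col' k (A *m B).
Proof. exact: mulmx_colsub. Qed.

Section Deflation.
Variable F : fieldType.

Lemma char_poly_uconj n (P A : 'M[F]_n) : P \in unitmx ->
  char_poly (P *m A *m invmx P) = char_poly A.
Proof.
move=> Pu; rewrite /char_poly /char_poly_mx.
have PPV : map_mx (@polyC F) P *m map_mx polyC (invmx P) = 1%:M.
  by rewrite -map_mxM mulmxV // map_mx1.
have -> : 'X%:M - map_mx polyC (P *m A *m invmx P) =
    map_mx polyC P *m ('X%:M - map_mx polyC A) *m map_mx polyC (invmx P).
  by rewrite !map_mxM mulmxBr mulmxBl mul_mx_scalar -scalemxAl PPV scalemx1.
rewrite !det_mulmx !det_map_mx mulrC mulrA -rmorphM /= det_inv mulVf ?mul1r //.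
by rewrite -unitfE -unitmxE.
Qed.

Lemma unitmx_with_row n (k : 'I_n) (v : 'rV[F]_n) : v 0 k != 0 ->
  exists2 P : 'M[F]_n, P \in unitmx & row k P = v.
Proof.
move=> vk; pose P := \matrix_(i, j) if i == k then v 0 j else (i == j)%:R.
exists P; last by apply/rowP => j; rewrite !mxE eqxx.
rewrite unitmxE unitfE (expand_det_col P k) (bigD1 k) //= big1 ?addr0 /cofactor; last first.
  by move=> i /negPf ik; rewrite mxE ik mul0r.
have -> : row' k (col' k P) = 1%:M.
  by apply/matrixP => i j; rewrite !mxE eq_sym (negPf (neq_lift k i)) (inj_eq lift_inj).
by rewrite det1 mxE eqxx addnn -signr_odd odd_double !mulr1.
Qed.

Lemma char_poly_eigenrow n (M : 'M[F]_n) (k : 'I_n) (l : F) :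
  row k M = l *: delta_mx 0 k ->
  char_poly M = ('X - l%:P) * char_poly (row' k (col' k M)).
Proof.
move=> /rowP Mk; rewrite /char_poly (expand_det_row _ k) (bigD1 k) //= big1 ?addr0.
  rewrite /cofactor row'_col'_char_poly_mx addnn -signr_odd odd_double mul1r.
  by have := Mk k; rewrite !mxE !eqxx mulr1 => ->.
move=> j /negPf jk; have := Mk j; rewrite !mxE jk andbF mulr0 => ->.
by rewrite eq_sym jk mulr0n subr0 mul0r.
Qed.

Lemma col'_eq0_delta n (k : 'I_n) (u : 'rV[F]_n) :
  col' k u = 0 -> u = u 0 k *: delta_mx 0 k.
Proof.
move=> /rowP u'0; apply/rowP => j; rewrite !mxE eqxx /=.
case: (unliftP k j) => [j'|] ->; last by rewrite eqxx mulr1.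
by have := u'0 j'; rewrite !mxE => ->; rewrite eq_sym (negPf (neq_lift k j')) mulr0.
Qed.

Lemma eigenvector_deflation n (A : 'M[F]_n) (v : 'rV_n) (l l' : F) (p : {poly F}) :
  v != 0 -> v *m A = l *: v -> char_poly A = ('X - l%:P) * p -> root p l' ->
  exists2 z : 'rV_n, ~~ (z <= v)%MS & exists c, z *m A = l' *: z + c *: v.
Proof.
(* In a basis whose k-th vector is v, the k-th row of A becomes l e_k, so l' is
   an eigenvalue of the minor C; its eigenvector, padded with a zero at k, is
   mapped to l' times itself up to a multiple of e_k. *)
move=> /rV0Pn[k vk] vA cpA pl'.
have [P Pu Pk] := unitmx_with_row vk.
have ekP : delta_mx 0 k *m P = v by rewrite -rowE.
pose M := P *m A *m invmx P; pose C := row' k (col' k M).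
have Mk : row k M = l *: delta_mx 0 k.
  by rewrite rowE /M !mulmxA ekP vA -scalemxAl -ekP mulmxK.
have cpC : char_poly C = p.
  apply: (mulfI (negbT (polyXsubC_eq0 l))).
  by rewrite -char_poly_eigenrow // char_poly_uconj.
have /eigenvalueP[y yC y_neq0] : eigenvalue C l' by rewrite eigenvalue_root_char cpC.
pose y' := y *m row' k 1%:M.
have y'_col' : col' k y' = y.
  rewrite -mulmx_col' -[RHS]mulmx1; congr (_ *m _).
  by apply/matrixP => i j; rewrite !mxE (inj_eq lift_inj).
set c := (y' *m M - l' *: y') 0 k.
have y'M : y' *m M = l' *: y' + c *: delta_mx 0 k.
  rewrite -(col'_eq0_delta (u := y' *m M - l' *: y')); first by rewrite addrC subrK.
  rewrite linearB linearZ /= y'_col' -mulmxA mul_row'1_mx -mulmx_col'.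
  suff -> : col' k (row' k M) = C by rewrite yC subrr.
  by apply/matrixP => i j; rewrite !mxE.
exists (y' *m P); last first.
  have PA : P *m A = M *m P by rewrite mulmxKV.
  by exists c; rewrite -mulmxA PA mulmxA y'M mulmxDl -!scalemxAl ekP.
apply: contra y_neq0 => /sub_rVP[a /(canRL (mulmxK Pu))].
rewrite -scalemxAl -ekP mulmxK // => y'E.
rewrite -y'_col' y'E linearZ /=; apply/eqP/rowP => j.
by rewrite !mxE eq_sym (negPf (neq_lift k j)) andbF mulr0.
Qed.

End Deflation.

Section DotProduct.
Variables (R : realFieldType) (n : nat).
Implicit Types (x y z : 'rV[R]_n) (a : R).

Definition dot x y : R := (x *m y^T) 0 0.

Lemma dotE x y : dot x y = \sum_i x 0 i * y 0 i.
Proof. by rewrite /dot mxE; apply: eq_bigr => i _; rewrite mxE. Qed.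

Lemma dotC x y : dot x y = dot y x.
Proof. by rewrite !dotE; apply: eq_bigr => i _; rewrite mulrC. Qed.

Lemma dotDl x y z : dot (x + y) z = dot x z + dot y z.
Proof. by rewrite /dot mulmxDl mxE. Qed.

Lemma dotZl a x y : dot (a *: x) y = a * dot x y.
Proof. by rewrite /dot -scalemxAl mxE. Qed.

Lemma dotZr a x y : dot x (a *: y) = a * dot x y.
Proof. by rewrite dotC dotZl dotC. Qed.

Lemma dotBl x y z : dot (x - y) z = dot x z - dot y z.
Proof. by rewrite -scaleN1r dotDl dotZl mulN1r. Qed.

Lemma dot_gt0 x : x != 0 -> 0 < dot x x.
Proof.
move=> /rV0Pn[k xk]; rewrite dotE (bigD1 k) //= ltr_pwDl ?sumr_ge0 //.
  by rewrite -expr2 lt_def sqr_ge0 sqrf_eq0 xk.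
by move=> i _; rewrite -expr2 sqr_ge0.
Qed.

Lemma dot_mulmx_sym (B : 'M[R]_n) x y : B^T = B -> dot (x *m B) y = dot x (y *m B).
Proof. by move=> sB; rewrite /dot trmx_mul sB mulmxA. Qed.

Lemma sym_orthogonal_eigenvector (A : 'M[R]_n) (v : 'rV_n) (l l' : R) (p : {poly R}) :
  A^T = A -> v != 0 -> v *m A = l *: v -> char_poly A = ('X - l%:P) * p -> root p l' ->
  exists z : 'rV_n, [/\ z != 0, z *m A = l' *: z & dot z v = 0].
Proof.
move=> sA v_neq0 vA cpA pl'.
have [z0 z0_notin_v [c z0A]] := eigenvector_deflation v_neq0 vA cpA pl'.
have vv_neq0 : dot v v != 0 by rewrite gt_eqF ?dot_gt0.
pose a := dot z0 v / dot v v; pose z := z0 - a *: v.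
have zv : dot z v = 0 by rewrite dotBl dotZl divfK ?subrr.
have zA : z *m A = l' *: z + (c + a * (l' - l)) *: v.
  by rewrite mulmxBl z0A -scalemxAl vA; apply/rowP => j; rewrite !mxE; ring.
(* The v-component of z A is orthogonal to v by symmetry, hence 0. *)
have c'0 : c + a * (l' - l) = 0.
  have := dot_mulmx_sym z v sA; rewrite zA vA dotDl !dotZl dotZr zv !mulr0 add0r.
  by move/eqP; rewrite mulf_eq0 (negPf vv_neq0) orbF => /eqP.
exists z; split=> //; last by rewrite zA c'0 scale0r addr0.
apply: contra z0_notin_v; rewrite subr_eq0 => /eqP ->.
exact/scalemx_sub/submx_refl.
Qed.

Lemma psd_hyperplane_kernel (B : 'M[R]_n) (o v z : 'rV_n) (mu : R) :
  v != 0 -> z != 0 -> dot z v = 0 -> v *m B = 0 -> z *m B = mu *: z -> mu <= 0 ->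
  (forall w, dot w o = 0 -> 0 <= dot (w *m B) w) ->
  exists w : 'rV_n, [/\ w != 0, dot w o = 0 & w *m B = 0].
Proof.
move=> v_neq0 z_neq0 zv vB zB mu_le0 psd.
have [vo|vo_neq0] := eqVneq (dot v o) 0; first by exists v.
pose w := dot z o *: v - dot v o *: z.
have wz : dot w z = - (dot v o * dot z z).
  by rewrite dotBl !dotZl [dot v z]dotC zv mulr0 sub0r.
have wo : dot w o = 0 by rewrite dotBl !dotZl mulrC subrr.
have wB : w *m B = - (dot v o * mu) *: z.
  by rewrite mulmxBl -!scalemxAl vB zB scaler0 sub0r scalerA scaleNr.
have mu0 : mu = 0.
  have := psd w wo; rewrite wB dotZl [dot z w]dotC wz mulrNN mulrACA.
  rewrite pmulr_rge0 ?pmulr_lge0 ?dot_gt0 // => [mu_ge0|]; first exact/le_anti/andP.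
  by rewrite -expr2 lt_def sqr_ge0 sqrf_eq0 vo_neq0.
exists w; split=> //; last by rewrite wB mu0 mulr0 oppr0 scale0r.
have : dot w z != 0 by rewrite wz oppr_eq0 mulf_neq0 // gt_eqF ?dot_gt0.
by apply: contraNneq => ->; rewrite /dot mul0mx mxE.
Qed.

End DotProduct.

Theorem lemma4p6 (R : realType) (d : nat) (e : rel 'I_d.+2)
  (lam : 'I_d.+2 -> R) :
  simple_graph e ->
  sorted_eigenvalues (adjmx R e) lam ->
  let B := (lam (inord 1))%:M - adjmx R e in
  (forall w : 'cV[R]_d.+2, in_ones_perp w -> 0 <= qform B w) ->
  (exists w : 'cV[R]_d.+2, w != 0 /\ in_ones_perp w /\
     exists gamma : R, B *m w = gamma *: ones R d.+2)
  /\ \det B = 0.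
Proof.
move=> [_ e_sym] [lam_sorted cpA] B psd.
set A := adjmx R e in cpA B psd *.
set i2 : 'I_d.+2 := inord 1 in B psd *.
have sA : A^T = A by apply/matrixP => i j; rewrite !mxE e_sym.
have sB : B^T = B by rewrite /B linearB /= tr_scalar_mx sA.
have i2_neq0 : i2 != ord0 by rewrite -val_eqE /= inordK.
have [p cpA2 p_lam0] := prod_XsubC_split lam i2_neq0; rewrite -cpA in cpA2.
have /eigenvalueP[v vA v_neq0] : eigenvalue A (lam i2).
  by rewrite eigenvalue_root_char cpA2 rootM root_XsubC eqxx.
have [z [z_neq0 zA zv]] := sym_orthogonal_eigenvector sA v_neq0 vA cpA2 p_lam0.
have vB : v *m B = 0 by rewrite mulmxBr mul_mx_scalar vA subrr.
have zB : z *m B = (lam i2 - lam ord0) *: z by rewrite mulmxBr mul_mx_scalar zA scalerBl.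
have l2_le_l1 : lam i2 - lam ord0 <= 0 by rewrite subr_le0 lam_sorted.
have perp_tr (w : 'rV_d.+2) : dot w (ones R d.+2)^T = 0 -> in_ones_perp w^T.
  by move=> wo; rewrite /in_ones_perp -trmx_mul mxE -wo /dot trmxK.
have psd_row (w : 'rV_d.+2) : dot w (ones R d.+2)^T = 0 -> 0 <= dot (w *m B) w.
  by move=> /perp_tr /psd; rewrite /qform trmxK.
have [w [w_neq0 wo wB]] := psd_hyperplane_kernel v_neq0 z_neq0 zv vB zB l2_le_l1 psd_row.
split; last by apply/eqP/det0P; exists v.
exists w^T; split; first by rewrite trmx_eq0.
split; first exact: perp_tr.
by exists 0; rewrite scale0r -sB -trmx_mul wB trmx0.
Qed.
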